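(* Let $p\ge1$, $\phi_1,\dots,\phi_p:\mathbb Z\to\mathbb C$ and $s\in\mathbb Z$. The $p$ functions $t\mapsto\xi^{(m)}_{t,s}$ ($1\le m\le p$), defined on $\mathbb Z_{s-p+1}=\{s-p+1,s-p+2,\dots\}$, form a fundamental set of solutions of the homogeneous equation $y_t=\sum_{l=1}^p\phi_l(t)y_{t-l}$ ($t\ge s+1$): they are solutions, they are linearly independent, and every solution $y:\mathbb Z_{s-p+1}\to\mathbb C$ of this equation is a linear combination of them.
   Context: Convention: $\phi_l(t)=0$ for $l>p$. For integers $t>s$ and $1\le m\le p$, $\Phi^{(m)}_{t,s}$ is the $(t-s)\times(t-s)$ lower Hessenberg matrix whose $(i,j)$ entry is: $\phi_{m+i-1}(s+i)$ if $j=1$; $-1$ if $j=i+1$; $\phi_{i-j+1}(s+i)$ if $2\le j\le i$; $0$ if $j>i+1$. For $t\ge s-p+1$: $\xi^{(m)}_{t,s}=\det\Phi^{(m)}_{t,s}$ if $t>s$; $\xi^{(m)}_{t,s}=1$ if $t=s-m+1$; $\xi^{(m)}_{t,s}=0$ if $s-p+1\le t\le s$, $t\ne s-m+1$. *)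

(* Complex numbers are modelled as  complex R  (= R[i])
   for an arbitrary  R : realType  (MathComp-Analysis reals). *)
From HB Require Import structures.
From mathcomp Require Import all_boot all_order all_algebra.
From mathcomp Require Import reals complex.
Set Implicit Arguments. Unset Strict Implicit. Unset Printing Implicit Defensive.
Import Order.TTheory GRing.Theory Num.Theory.
Local Open Scope ring_scope.

Section Defs.
Variables (C : comRingType) (p : nat).
(* phi : 'I_p -> int -> C,  phi i  represents  phi_{i+1} *)
Variable phi : 'I_p -> int -> C.

(* phi_l(t), with the convention phi_l = 0 for l > p (and for l = 0) *)
Definition phiL (l : nat) (t : int) : C :=
  match insub l.-1 with
  | Some i => if (0 < l)%N then phi i t else 0
  | None => 0
  end.

(* Phi^{(m)}_{t,s} with n = t - s; 0-indexed entries (i,j) correspond to the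
   paper's (i+1, j+1). *)
Definition PhiMat (m : nat) (s : int) (n : nat) : 'M[C]_n :=
  \matrix_(i < n, j < n)
    if j == 0%N :> nat then phiL (m + i) (s + (i.+1)%:Z)
    else if j == i.+1 :> nat then -1
    else if (j <= i)%N then phiL (i - j).+1 (s + (i.+1)%:Z)
    else 0.

(* xi^{(m)}_{t,s} (meaningful for t >= s - p + 1) *)
Definition xi (m : nat) (t s : int) : C :=
  if s < t then \det (PhiMat m s `|t - s|%N)
  else if t == s - m%:Z + 1 then 1 else 0.

Definition is_solution (s : int) (y : int -> C) : Prop :=
  forall t : int, s + 1 <= t ->
    y t = \sum_(1 <= l < p.+1) phiL l t * y (t - l%:Z).
End Defs.

From HB Require Import structures.
From mathcomp Require Import all_boot all_order all_algebra zify.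
From mathcomp Require Import reals complex.
Set Implicit Arguments. Unset Strict Implicit. Unset Printing Implicit Defensive.
Import Order.TTheory GRing.Theory Num.Theory.
Local Open Scope ring_scope.

(* Expanding a lower Hessenberg determinant with -1 on the superdiagonal along
   its last column expresses it through its leading principal minors; for
   [PhiMat] this is exactly the recurrence, the first-column entry
   phi_{m+n}(t) playing the role of the initial value xi^{(m)}_{s-m+1} = 1.
   On the window s-p+1..s the functions xi^{(m)} are the unit vectors, and a
   solution is determined by its values there, which gives both independence
   and spanning. *)

Lemma det_hessenberg (R : comNzRingType) (f : nat -> nat -> R) n :
  (forall i, (i < n)%N -> f i i.+1 = -1) ->
  (forall i j, (i < n)%N -> (i.+1 < j)%N -> f i j = 0) ->
  \det (\matrix_(i < n.+1, j < n.+1) f i j) =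
    \sum_(k < n.+1) f n k * \det (\matrix_(i < k, j < k) f i j).
Proof.
elim: n f => [|n IHn] f f_super f_upper.
  by rewrite det_mx11 big_ord1 det_mx00 mulr1 mxE.
rewrite (expand_det_col _ ord_max) !big_ord_recr /= big1 ?add0r; last first.
  by move=> i _; rewrite mxE f_upper ?mul0r //= ltnS // ltnW.
(* Deleting row [n] and the last column leaves a Hessenberg matrix whose last
   row is row [n.+1]. *)
pose g i j := if i == n then f n.+1 j else f i j.
have minor_prev : row' (widen_ord (leqnSn n.+1) ord_max)
    (col' ord_max (\matrix_(i < n.+2, j < n.+2) f i j))
    = \matrix_(i < n.+1, j < n.+1) g i j.
  apply/matrixP => i j; rewrite !mxE lift_max /g /= /bump /=.
  have := ltn_ord i; rewrite ltnS leq_eqVlt => /predU1P[-> | lt_in].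
    by rewrite leqnn eqxx.
  by rewrite leqNgt lt_in add0n (ltn_eqF lt_in).
have minor_last : row' ord_max (col' ord_max (\matrix_(i < n.+2, j < n.+2) f i j))
    = \matrix_(i < n.+1, j < n.+1) f i j.
  by apply/matrixP => i j; rewrite !mxE !lift_max.
have g_eq_f k : (k <= n)%N ->
    \det (\matrix_(i < k, j < k) g i j) = \det (\matrix_(i < k, j < k) f i j).
  move=> le_kn; congr (\det _); apply/matrixP => i j.
  by rewrite !mxE /g ltn_eqF // (leq_trans (ltn_ord i)).
have g_super i : (i < n)%N -> g i i.+1 = -1.
  by move=> lt_in; rewrite /g ltn_eqF // f_super // ltnW.
have g_upper i j : (i < n)%N -> (i.+1 < j)%N -> g i j = 0.
  by move=> lt_in; rewrite /g ltn_eqF // => /f_upper->; rewrite // ltnW.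
rewrite /cofactor minor_prev minor_last (IHn g g_super g_upper).
rewrite big_ord_recr /=; under eq_bigr => i _ do rewrite g_eq_f 1?ltnW //.
rewrite g_eq_f // /g eqxx !mxE /= f_super //.
rewrite addnS !addnn -!mul2n exprS !exprM sqrrN !expr1n.
by rewrite mulr1 !mulN1r opprK !mul1r.
Qed.

Section Solutions.
Variables (C : comNzRingType) (p : nat) (phi : 'I_p -> int -> C).

Lemma phiL_gt l t : (p < l)%N -> phiL phi l t = 0.
Proof.
by move=> lt_pl; rewrite /phiL insubF // ltnNge -ltnS prednK ?lt_pl // (leq_ltn_trans _ lt_pl).
Qed.

Lemma sum_phiL_widen n t (F : nat -> C) : (p <= n)%N ->
  \sum_(1 <= l < p.+1) phiL phi l t * F l = \sum_(1 <= l < n.+1) phiL phi l t * F l.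
Proof.
move=> le_pn; rewrite [RHS](big_cat_nat _ (n := p.+1)) //=.
rewrite [X in _ + X]big_nat_cond [X in _ + X]big1 ?addr0 //.
by move=> l /andP[/andP[lt_pl _] _]; rewrite phiL_gt ?mul0r.
Qed.

Lemma is_solution_lincomb (I : finType) s (c : I -> C) (y : I -> int -> C) :
  (forall i, is_solution phi s (y i)) ->
  is_solution phi s (fun t => \sum_i c i * y i t).
Proof.
move=> y_sol t le_st; under eq_bigr do rewrite y_sol // mulr_sumr.
rewrite exchange_big; apply: eq_bigr => l _.
by rewrite mulr_sumr; under eq_bigr do rewrite mulrCA.
Qed.

Lemma is_solution_eq_window s (y z : int -> C) :
  is_solution phi s y -> is_solution phi s z ->
  (forall k, (k < p)%N -> y (s - k%:Z) = z (s - k%:Z)) ->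
  forall t, s - p%:Z + 1 <= t -> y t = z t.
Proof.
move=> y_sol z_sol yz_window t le_t.
suff yz_below n : forall t, s - p%:Z + 1 <= t < s - p%:Z + 1 + n%:Z -> y t = z t.
  by apply: (yz_below `|t - s + p%:Z|.+1); lia.
elim: n => [|n IHn] {le_t}t /andP[le_t lt_t]; first lia.
have [le_ts | lt_st] := lerP t s.
  have -> : t = s - `|s - t|%N%:Z by lia.
  by apply: yz_window; lia.
rewrite y_sol ?z_sol; try lia.
by apply: eq_big_nat => l /andP[l_gt0 l_le]; rewrite IHn //; lia.
Qed.

Definition Phi_coef (m : nat) (s : int) (i j : nat) : C :=
  if j == 0%N then phiL phi (m + i) (s + i.+1%:Z)
  else if j == i.+1 then -1
  else if (j <= i)%N then phiL phi (i - j).+1 (s + i.+1%:Z)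
  else 0.

Lemma Phi_coef_super m s i : Phi_coef m s i i.+1 = -1.
Proof. by rewrite /Phi_coef /= eqxx. Qed.

Lemma Phi_coef_upper m s i j : (i.+1 < j)%N -> Phi_coef m s i j = 0.
Proof.
by move=> lt_ij; rewrite /Phi_coef !ifF //; apply/negbTE; lia.
Qed.

Lemma xi_det m s n :
  xi phi m (s + n.+1%:Z) s = \det (\matrix_(i < n.+1, j < n.+1) Phi_coef m s i j).
Proof. by rewrite /xi ifT; [rewrite addrAC subrr add0r | lia]. Qed.

Lemma xi_le m s t : t <= s -> xi phi m t s = (t == s - m%:Z + 1)%:R.
Proof. by move=> le_ts; rewrite /xi ltNge le_ts /=; case: eqP. Qed.

Lemma is_solution_xi m s : (0 < m)%N -> is_solution phi s (fun t => xi phi m t s).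
Proof.
move=> m_gt0 t lt_st; have [N def_t] : exists N : nat, t = s + N.+1%:Z.
  by exists `|t - s|.-1; lia.
rewrite {1}def_t xi_det det_hessenberg => [|i _|i j _]; last 2 first.
- exact: Phi_coef_super.
- exact: Phi_coef_upper.
rewrite big_ord_recl det_mx00 mulr1 (sum_phiL_widen _ _ (leq_addl (N + m) p)).
rewrite (big_cat_nat _ (n := N.+1)) //=; last by rewrite ltnS -addnA leq_addr.
have sum_initial : \sum_(N.+1 <= l < (N + m + p).+1) phiL phi l t * xi phi m (t - l%:Z) s
    = phiL phi (m + N) t.
  rewrite (eq_big_nat _ _ (F2 := fun l => if l == (m + N)%N then phiL phi l t else 0)).
    by rewrite -big_mkcond big_nat1_eq ifT //; lia.
  move=> l /andP[lt_Nl _]; rewrite xi_le; last by lia.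
  have -> : (t - l%:Z == s - m%:Z + 1) = (l == m + N)%N by apply/eqP/eqP; lia.
  by case: eqP => _; rewrite ?mulr1 ?mulr0.
rewrite sum_initial addrC; congr (_ + _).
  by rewrite /Phi_coef def_t.
rewrite big_add1 /= big_nat_rev big_mkord; apply: eq_bigr => k _.
rewrite /bump leq0n add1n /Phi_coef /= add0n ifF ?ifT; last 2 first.
- exact: ltn_ord.
- by rewrite eqSS ltn_eqF.
rewrite -xi_det def_t; congr (_ * xi phi m _ s); have := ltn_ord k; lia.
Qed.

Lemma xi_window m k s : xi phi m.+1 (s - k%:Z) s = (m == k)%:R.
Proof. by rewrite xi_le; [congr (_ %:R); apply/eqP/eqP | ]; lia. Qed.

Lemma sum_xi_window s (c : 'I_p -> C) (k : 'I_p) :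
  \sum_(m < p) c m * xi phi m.+1 (s - k%:Z) s = c k.
Proof.
rewrite (bigD1 k) //= xi_window eqxx mulr1 big1 ?addr0 // => m /negbTE ne_mk.
by rewrite xi_window val_eqE ne_mk mulr0.
Qed.

End Solutions.

Theorem proposition2 (R : realType) (p : nat) (hp : (1 <= p)%N)
    (phi : 'I_p -> int -> complex R) (s : int) :
  (* each xi^{(m)}_{., s}, 1 <= m <= p, solves the equation *)
  (forall m : 'I_p, is_solution phi s (fun t => xi phi m.+1 t s))
  /\
  (* linear independence on Z_{s-p+1} *)
  (forall c : 'I_p -> complex R,
     (forall t : int, s - p%:Z + 1 <= t ->
        \sum_(m < p) c m * xi phi m.+1 t s = 0) ->
     forall m : 'I_p, c m = 0)
  /\
  (* every solution on Z_{s-p+1} is a linear combination *)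
  (forall y : int -> complex R, is_solution phi s y ->
     exists c : 'I_p -> complex R,
       forall t : int, s - p%:Z + 1 <= t ->
         y t = \sum_(m < p) c m * xi phi m.+1 t s).
Proof.
have xi_sol (m : 'I_p) : is_solution phi s (fun t => xi phi m.+1 t s).
  exact: is_solution_xi.
split; [exact: xi_sol | split].
  move=> c c_eq0 m; rewrite -(sum_xi_window phi s c m); apply: c_eq0.
  by have := ltn_ord m; lia.
move=> y y_sol; pose c m := y (s - (m : 'I_p)%:Z); exists c => t le_t.
apply: (is_solution_eq_window y_sol (is_solution_lincomb c xi_sol)) le_t => k lt_kp.
by rewrite (sum_xi_window phi s c (Ordinal lt_kp)).
Qed.
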